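(* There are absolute constants $\bar c>0$ such that if $c_1,c_2\le\bar c$ (e.g. $c_1=c_2=\frac1{200}$), the concentration conditions (CC) hold at $\mathbf{x}_t$ with constants $c_1,c_2$, $c_3\in[0,1)$, and $\mathbf{\Delta}_t$ satisfies the Case 2 requirement (namely, whenever $\|\mathbf{\Delta}_t^\star\|\ge\frac12\sqrt{\epsilon/\rho}$, $\tilde m_t(\mathbf{\Delta}_t)\le\tilde m_t(\mathbf{\Delta}_t^\star)+\frac{c_3}{12}\rho\|\mathbf{\Delta}_t^\star\|^3$), and $\mathbf{x}_t+\mathbf{\Delta}_t^\star$ is not an $\epsilon$-second-order stationary point of $f$, then $m_t(\mathbf{x}_t+\mathbf{\Delta}_t)-m_t(\mathbf{x}_t)\le-\frac{1-c_3}{96}\sqrt{\epsilon^3/\rho}$.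
   Context: $f:\mathbb{R}^d\to\mathbb{R}$ twice differentiable with $\rho$-Lipschitz Hessian (spectral norm); $\epsilon>0$. $\epsilon$-second-order stationary point: $\|\nabla f(\mathbf{x})\|\le\epsilon$ and $\lambda_{\min}(\nabla^2 f(\mathbf{x}))\ge-\sqrt{\rho\epsilon}$. (CC) at $\mathbf{x}_t$ with constants $c_1,c_2$: vector $\mathbf{g}_t$ and symmetric matrix $\mathbf{B}_t$ with $\|\mathbf{g}_t-\nabla f(\mathbf{x}_t)\|\le c_1\epsilon$ and $\|(\mathbf{B}_t-\nabla^2 f(\mathbf{x}_t))\mathbf{v}\|\le c_2\sqrt{\rho\epsilon}\|\mathbf{v}\|$ for all $\mathbf{v}$. Cubic model: $m_t(\mathbf{y})=f(\mathbf{x}_t)+(\mathbf{y}-\mathbf{x}_t)^\top\mathbf{g}_t+\frac12(\mathbf{y}-\mathbf{x}_t)^\top\mathbf{B}_t(\mathbf{y}-\mathbf{x}_t)+\frac\rho6\|\mathbf{y}-\mathbf{x}_t\|^3$, $\tilde m_t(\mathbf{\Delta})=m_t(\mathbf{x}_t+\mathbf{\Delta})-f(\mathbf{x}_t)$, and $\mathbf{\Delta}_t^\star$ a global minimizer of $\tilde m_t$. *)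

From mathcomp Require Import ssreflect ssrfun ssrbool eqtype ssrnat seq fintype.
From Stdlib Require Import Reals.
Open Scope R_scope.

Definition vec (d : nat) := 'I_d -> R.
Definition mat (d : nat) := 'I_d -> 'I_d -> R.

Definition vsum {d : nat} (F : 'I_d -> R) : R :=
  foldr Rplus 0 (map F (enum 'I_d)).

Definition vadd {d} (u v : vec d) : vec d := fun i => u i + v i.
Definition vsub {d} (u v : vec d) : vec d := fun i => u i - v i.
Definition vzero {d} : vec d := fun _ => 0.
Definition vscale {d} (a : R) (v : vec d) : vec d := fun i => a * v i.
Definition dot {d} (u v : vec d) : R := vsum (fun i => u i * v i).
Definition vnorm {d} (v : vec d) : R := sqrt (dot v v).

Definition mv {d} (A : mat d) (v : vec d) : vec d :=
  fun i => vsum (fun j => A i j * v j).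
Definition msub {d} (A B : mat d) : mat d := fun i j => A i j - B i j.
Definition mx_symmetric {d} (A : mat d) : Prop := forall i j, A i j = A j i.
Definition quad {d} (A : mat d) (v : vec d) : R := dot v (mv A v).

(* Fréchet derivatives: g is the gradient of f, H is the derivative of g
   (i.e. the Hessian of f). *)
Definition is_gradient {d} (f : vec d -> R) (g : vec d -> vec d) : Prop :=
  forall x eps, 0 < eps -> exists delta, 0 < delta /\
    forall h : vec d, vnorm h < delta ->
      Rabs (f (vadd x h) - f x - dot (g x) h) <= eps * vnorm h.

Definition is_jacobian {d} (g : vec d -> vec d) (H : vec d -> mat d) : Prop :=
  forall x eps, 0 < eps -> exists delta, 0 < delta /\
    forall h : vec d, vnorm h < delta ->
      vnorm (vsub (vsub (g (vadd x h)) (g x)) (mv (H x) h)) <= eps * vnorm h.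

(* ||A||_spectral <= L, unfolded: ||A v|| <= L ||v|| for all v. *)
Definition spec_norm_le {d} (A : mat d) (L : R) : Prop :=
  forall v : vec d, vnorm (mv A v) <= L * vnorm v.

Definition hess_lipschitz {d} (H : vec d -> mat d) (rho : R) : Prop :=
  forall x y : vec d, spec_norm_le (msub (H x) (H y)) (rho * vnorm (vsub x y)).

Definition is_eigenvalue {d} (A : mat d) (l : R) : Prop :=
  exists v : vec d, v <> vzero /\ mv A v = vscale l v.
Definition lambda_min_ge {d} (A : mat d) (a : R) : Prop :=
  forall l, is_eigenvalue A l -> a <= l.

Definition is_eps_SOSP {d} (g : vec d -> vec d) (H : vec d -> mat d)
  (rho eps : R) (x : vec d) : Prop :=
  vnorm (g x) <= eps /\ lambda_min_ge (H x) (- sqrt (rho * eps)).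

Definition CC {d} (g : vec d -> vec d) (H : vec d -> mat d) (rho eps c1 c2 : R)
  (x gt : vec d) (Bt : mat d) : Prop :=
  vnorm (vsub gt (g x)) <= c1 * eps /\
  forall v : vec d, vnorm (mv (msub Bt (H x)) v) <= c2 * sqrt (rho * eps) * vnorm v.

Definition cubic_model {d} (f : vec d -> R) (rho : R) (x gt : vec d) (Bt : mat d)
  (y : vec d) : R :=
  let s := vsub y x in
  f x + dot s gt + / 2 * quad Bt s + rho / 6 * vnorm s ^ 3.

Definition cubic_model_shift {d} (f : vec d -> R) (rho : R) (x gt : vec d)
  (Bt : mat d) (D : vec d) : R :=
  cubic_model f rho x gt Bt (vadd x D) - f x.

(* A global minimizer [D] of the cubic model satisfies the Nesterov-Polyak conditions
   [g_t + B_t D + (rho/2) |D| D = 0] and [B_t + (rho/2) |D| I >= 0]; together they give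
   [m_t(D) <= -(rho/12) |D|^3].  If [|D| < sqrt(eps/rho)/2], the first condition, the
   Lipschitz Taylor bound [|grad f(x+D) - grad f(x) - hess f(x) D| <= rho |D|^2] and (CC)
   bound [|grad f(x+D)|] by [eps], while the second condition and (CC) bound the
   eigenvalues of [hess f(x+D)] below by [-sqrt(rho eps)], so [x+D] would be an
   eps-second-order stationary point.  Hence [|D| >= sqrt(eps/rho)/2], and the Case 2
   requirement yields [m_t(D_t) <= -((1-c3)/12) rho |D|^3 <= -((1-c3)/96) sqrt(eps^3/rho)]. *)

From mathcomp Require Import ssreflect ssrfun ssrbool eqtype ssrnat seq fintype.
From Stdlib Require Import Reals Lra Psatz FunctionalExtensionality.
Open Scope R_scope.

Section SeqSum.
Context {I : eqType}.
Implicit Types (s : seq I) (F G : I -> R).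

Definition sum_seq s F : R := foldr Rplus 0 (map F s).

Lemma sum_seqD s F G : sum_seq s (fun i => F i + G i) = sum_seq s F + sum_seq s G.
Proof. rewrite /sum_seq; elim: s => [|a s IH] /=; last rewrite IH; lra. Qed.

Lemma sum_seqZ s a F : sum_seq s (fun i => a * F i) = a * sum_seq s F.
Proof. rewrite /sum_seq; elim: s => [|b s IH] /=; last rewrite IH; lra. Qed.

Lemma eq_sum_seq s F G : (forall i, F i = G i) -> sum_seq s F = sum_seq s G.
Proof. by move=> FG; rewrite /sum_seq; elim: s => [|a s IH] //=; rewrite IH FG. Qed.

Lemma sum_seq_ge0 s F : (forall i, 0 <= F i) -> 0 <= sum_seq s F.
Proof. move=> F0; rewrite /sum_seq; elim: s => [|a s IH] /=; [lra | have := F0 a; lra]. Qed.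

Lemma sum_seq_ge_term s F i : (forall i, 0 <= F i) -> i \in s -> F i <= sum_seq s F.
Proof.
move=> F0; elim: s => [|a s IH] //; rewrite in_cons => /orP [/eqP -> | /IH].
- by have := sum_seq_ge0 s F F0; rewrite /sum_seq /=; lra.
- by have := F0 a; rewrite /sum_seq /=; lra.
Qed.

End SeqSum.

Lemma exchange_sum_seq (I J : eqType) (s : seq I) (t : seq J) (F : I -> J -> R) :
  sum_seq s (fun i => sum_seq t (F i)) = sum_seq t (fun j => sum_seq s (F^~ j)).
Proof.
elim: s => [|a s IH].
- transitivity (0 * sum_seq t (fun _ => 0)); first by rewrite /sum_seq /=; lra.
  by rewrite -sum_seqZ; apply: eq_sum_seq => j; rewrite /sum_seq /=; lra.
- rewrite [sum_seq (a :: s) _]/sum_seq /= -/(sum_seq s _) IH -sum_seqD.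
  by apply: eq_sum_seq => j; rewrite /sum_seq.
Qed.

Section VSum.
Context {d : nat}.
Implicit Types F G : 'I_d -> R.

Lemma vsumD F G : vsum (fun i => F i + G i) = vsum F + vsum G.
Proof. exact: sum_seqD. Qed.

Lemma vsumZ a F : vsum (fun i => a * F i) = a * vsum F.
Proof. exact: sum_seqZ. Qed.

Lemma eq_vsum F G : (forall i, F i = G i) -> vsum F = vsum G.
Proof. exact: eq_sum_seq. Qed.

Lemma vsumB F G : vsum (fun i => F i - G i) = vsum F - vsum G.
Proof.
rewrite (eq_vsum _ (fun i => F i + -1 * G i)) ?vsumD ?vsumZ => [|i]; lra.
Qed.

Lemma vsum_ge0 F : (forall i, 0 <= F i) -> 0 <= vsum F.
Proof. exact: sum_seq_ge0. Qed.

Lemma vsum_ge_term F i : (forall i, 0 <= F i) -> F i <= vsum F.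
Proof. by move=> F0; apply: sum_seq_ge_term; rewrite ?mem_enum. Qed.

Lemma exchange_vsum (F : 'I_d -> 'I_d -> R) :
  vsum (fun i => vsum (F i)) = vsum (fun j => vsum (F^~ j)).
Proof. exact: exchange_sum_seq. Qed.
End VSum.

Lemma Rabs_le_between x a : Rabs x <= a -> - a <= x <= a.
Proof. by have := Rle_abs x; have := Rle_abs (- x); rewrite Rabs_Ropp; lra. Qed.

Section Vectors.
Context {d : nat}.
Implicit Types (u v w : vec d) (A : mat d).

Lemma dotC u v : dot u v = dot v u.
Proof. by apply: eq_vsum => i; lra. Qed.

Lemma dotDl u v w : dot (vadd u v) w = dot u w + dot v w.
Proof. by rewrite /dot -vsumD; apply: eq_vsum => i; rewrite /vadd; lra. Qed.

Lemma dotDr u v w : dot u (vadd v w) = dot u v + dot u w.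
Proof. by rewrite dotC dotDl !(dotC u). Qed.

Lemma dotBl u v w : dot (vsub u v) w = dot u w - dot v w.
Proof. by rewrite /dot -vsumB; apply: eq_vsum => i; rewrite /vsub; lra. Qed.

Lemma dotBr u v w : dot u (vsub v w) = dot u v - dot u w.
Proof. by rewrite dotC dotBl !(dotC u). Qed.

Lemma dotZl a u v : dot (vscale a u) v = a * dot u v.
Proof. by rewrite /dot -vsumZ; apply: eq_vsum => i; rewrite /vscale; lra. Qed.

Lemma dotZr a u v : dot u (vscale a v) = a * dot u v.
Proof. by rewrite dotC dotZl dotC. Qed.

Lemma dot0l u : dot vzero u = 0.
Proof.
rewrite -(Rmult_0_l (dot u u)) -dotZl.
by apply: eq_vsum => i; rewrite /vscale /vzero; lra.
Qed.

Lemma dot_ge0 u : 0 <= dot u u.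
Proof. by apply: vsum_ge0 => i; nra. Qed.

Lemma dot_eq0 u : dot u u = 0 -> u = vzero.
Proof.
move=> u0; apply: functional_extensionality => i.
have := vsum_ge_term (fun i => u i * u i) i (fun i => ltac:(nra)).
by rewrite -/(dot u u) u0 /vzero; nra.
Qed.

Lemma vnorm_ge0 u : 0 <= vnorm u.
Proof. exact: sqrt_pos. Qed.

Lemma vnorm_mul_self u : vnorm u * vnorm u = dot u u.
Proof. exact/sqrt_sqrt/dot_ge0. Qed.

Lemma vnorm0 : vnorm (@vzero d) = 0.
Proof. by rewrite /vnorm dot0l sqrt_0. Qed.

Lemma vnormZ a u : vnorm (vscale a u) = Rabs a * vnorm u.
Proof.
rewrite /vnorm dotZl dotZr -Rmult_assoc sqrt_mult_alt; last by nra.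
by rewrite -sqrt_Rsqr_abs.
Qed.

Lemma dot_sq_le u v : dot u v * dot u v <= dot u u * dot v v.
Proof.
have quad_ge0 t : 0 <= dot u u - 2 * t * dot u v + t * t * dot v v.
  have := dot_ge0 (vsub u (vscale t v)).
  by rewrite !dotBl !dotBr !dotZl !dotZr (dotC v u); lra.
have uu := dot_ge0 u; have vv := dot_ge0 v.
have [v0 | v_ne0] := Req_dec (dot v v) 0.
- (* the quadratic in t is affine, so its slope must vanish *)
  have [-> | uv_ne0] := Req_dec (dot u v) 0; first by nra.
  have := quad_ge0 ((dot u u + 1) / (2 * dot u v)); rewrite v0.
  have -> : 2 * ((dot u u + 1) / (2 * dot u v)) * dot u v = dot u u + 1 by field.
  lra.
- have vv_pos : 0 < dot v v by lra.
  have := quad_ge0 (dot u v / dot v v).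
  have -> : dot u v / dot v v * (dot u v / dot v v) * dot v v = dot u v * dot u v / dot v v
    by field.
  move=> h; apply: (Rmult_le_reg_r (/ dot v v)); first exact: Rinv_0_lt_compat.
  have -> : dot u u * dot v v * / dot v v = dot u u by field.
  rewrite /Rdiv in h; lra.
Qed.

Lemma Rabs_dot_le u v : Rabs (dot u v) <= vnorm u * vnorm v.
Proof.
have := vnorm_ge0 u; have := vnorm_ge0 v => nv nu.
apply: Rsqr_incr_0_var; last by nra.
by rewrite -Rsqr_abs /Rsqr; have := dot_sq_le u v; rewrite -!vnorm_mul_self; nra.
Qed.

Lemma dot_le u v : dot u v <= vnorm u * vnorm v.
Proof. by case: (Rabs_le_between _ _ (Rabs_dot_le u v)). Qed.

Lemma dot_ge u v : - (vnorm u * vnorm v) <= dot u v.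
Proof. by case: (Rabs_le_between _ _ (Rabs_dot_le u v)). Qed.

Lemma vnorm_add_le u v : vnorm (vadd u v) <= vnorm u + vnorm v.
Proof.
have := vnorm_ge0 u; have := vnorm_ge0 v; have := vnorm_ge0 (vadd u v) => nuv nv nu.
apply: Rsqr_incr_0_var; last by nra.
rewrite /Rsqr vnorm_mul_self !dotDl !dotDr (dotC v u).
by have := dot_le u v; rewrite -(vnorm_mul_self u) -(vnorm_mul_self v); nra.
Qed.

Lemma vnorm_sub_le u v : vnorm (vsub u v) <= vnorm u + vnorm v.
Proof.
have -> : vsub u v = vadd u (vscale (-1) v).
  by apply: functional_extensionality => i; rewrite /vsub /vadd /vscale; lra.
by rewrite -[vnorm v]Rmult_1_l -Rabs_R1 -Rabs_Ropp -vnormZ; apply: vnorm_add_le.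
Qed.

Lemma vnorm_add_dev u v : Rabs (vnorm (vadd u v) - vnorm u) <= vnorm v.
Proof.
have vnorm_u : vnorm u <= vnorm (vadd u v) + vnorm v.
  have := vnorm_sub_le (vadd u v) v.
  have -> // : vsub (vadd u v) v = u.
  by apply: functional_extensionality => i; rewrite /vsub /vadd; lra.
by apply: Rabs_le; have := vnorm_add_le u v; lra.
Qed.

(* With [N^2 = r^2 + 2 p + w] one has the identity
   [N^3 - r^3 - 3 r p = (N - r)^2 (N + r/2) + 3/2 r w]. *)
Lemma vnorm_cube_step u h :
  vnorm (vadd u h) ^ 3 - vnorm u ^ 3 - 3 * vnorm u * dot u h <=
  3 / 2 * vnorm u * dot h h + (vnorm (vadd u h) - vnorm u) * (2 * dot u h + dot h h).
Proof.
have := vnorm_ge0 u; have := vnorm_mul_self (vadd u h).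
rewrite dotDl !dotDr (dotC h u) -(vnorm_mul_self u).
set N := vnorm (vadd u h); set r := vnorm u => NN r0.
have -> : 2 * dot u h + dot h h = N * N - r * r by lra.
have : 0 <= (N - r) ^ 2 * r by apply: Rmult_le_pos; [apply: pow2_ge_0 | done].
have -> : dot h h = N * N - r * r - 2 * dot u h by lra.
by nra.
Qed.

Lemma vnorm_cube_step_le u h :
  vnorm (vadd u h) ^ 3 - vnorm u ^ 3 - 3 * vnorm u * dot u h <=
  vnorm h ^ 2 * (7 / 2 * vnorm u + vnorm h).
Proof.
have := vnorm_cube_step u h; have := vnorm_add_dev u h; have := Rabs_dot_le u h.
rewrite -vnorm_mul_self.
set N := vnorm (vadd u h); set r := vnorm u; set n := vnorm h.
move=> /Rabs_le_between [p_lo p_hi] /Rabs_le_between [N_lo N_hi] step.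
have := vnorm_ge0 u; have := vnorm_ge0 h; rewrite -/r -/n => n0 r0.
(* the product of [|N - r| <= n] and [|2 p + n^2| <= 2 r n + n^2] *)
have : 0 <= (n - (N - r)) * (2 * r * n + n * n + (2 * dot u h + n * n)) by nra.
have : 0 <= (n + (N - r)) * (2 * r * n + n * n - (2 * dot u h + n * n)) by nra.
by nra.
Qed.

Lemma vnorm_cube_orth_le u h : dot u h = 0 ->
  vnorm (vadd u h) ^ 3 - vnorm u ^ 3 <= vnorm h ^ 2 * (3 / 2 * vnorm u + vnorm h).
Proof.
move=> uh0; have := vnorm_cube_step u h; have := vnorm_add_dev u h.
rewrite uh0 -vnorm_mul_self.
set N := vnorm (vadd u h); set r := vnorm u; set n := vnorm h.
move=> /Rabs_le_between [N_lo N_hi] step.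
have := vnorm_ge0 h; rewrite -/n => n0.
have : (N - r) * (n * n) <= n * (n * n) by apply: Rmult_le_compat_r; nra.
by nra.
Qed.

Lemma mvD A u v : mv A (vadd u v) = vadd (mv A u) (mv A v).
Proof.
apply: functional_extensionality => i; rewrite /mv /vadd -vsumD.
by apply: eq_vsum => j; lra.
Qed.

Lemma mvZ A a u : mv A (vscale a u) = vscale a (mv A u).
Proof.
apply: functional_extensionality => i; rewrite /mv /vscale -vsumZ.
by apply: eq_vsum => j; lra.
Qed.

Lemma mv_msub A B u : mv (msub A B) u = vsub (mv A u) (mv B u).
Proof.
apply: functional_extensionality => i; rewrite /mv /vsub -vsumB.
by apply: eq_vsum => j; rewrite /msub; lra.
Qed.

Lemma dot_mv_sym A u v : mx_symmetric A -> dot u (mv A v) = dot v (mv A u).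
Proof.
move=> A_sym; rewrite /dot /mv.
under eq_vsum => i do rewrite -vsumZ.
rewrite exchange_vsum; apply: eq_vsum => j; rewrite -vsumZ.
by apply: eq_vsum => i; rewrite A_sym; lra.
Qed.
End Vectors.

Lemma ge0_of_ge0_add_mul c k : (forall s, 0 < s <= 1 -> 0 <= c + s * k) -> 0 <= c.
Proof.
move=> near0; apply: Rnot_lt_le => c_neg.
have k0 := Rabs_pos k; have := Rle_abs k => k_le.
have s_range : 0 < - c / (Rabs k - c) <= 1.
  split; first by apply: Rdiv_lt_0_compat; lra.
  by apply: (Rmult_le_reg_r (Rabs k - c)); [lra | field_simplify; lra].
set s := - c / (Rabs k - c) in s_range *.
have := near0 s s_range.
have : s * k <= s * Rabs k by apply: Rmult_le_compat_l; lra.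
have : c + s * Rabs k = - (c * c) / (Rabs k - c) by rewrite /s; field; lra.
have : 0 < c * c / (Rabs k - c) by apply: Rdiv_lt_0_compat; nra.
rewrite /Rdiv; lra.
Qed.

Section CubicModel.
Context {d : nat}.
Variables (f : vec d -> R) (rho : R) (x gt : vec d) (B : mat d).
Hypothesis B_sym : mx_symmetric B.
Hypothesis rho_gt0 : 0 < rho.

Local Notation mt := (cubic_model_shift f rho x gt B).

Lemma cubic_model_shiftE D : mt D = dot D gt + / 2 * quad B D + rho / 6 * vnorm D ^ 3.
Proof.
rewrite /cubic_model_shift /cubic_model /=.
have -> : vsub (vadd x D) x = D.
  by apply: functional_extensionality => i; rewrite /vsub /vadd; lra.
lra.
Qed.

Lemma cubic_model_diff D :
  cubic_model f rho x gt B (vadd x D) - cubic_model f rho x gt B x = mt D.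
Proof.
rewrite /cubic_model_shift /cubic_model /=.
have -> : vsub x x = vzero by apply: functional_extensionality => i; rewrite /vsub /vzero; lra.
by rewrite /quad !dot0l vnorm0; lra.
Qed.

Definition cubic_model_grad D := vadd (vadd gt (mv B D)) (vscale (rho / 2 * vnorm D) D).

Lemma cubic_model_step D h :
  mt (vadd D h) - mt D = dot h (cubic_model_grad D) + / 2 * quad B h
    + rho / 6 * (vnorm (vadd D h) ^ 3 - vnorm D ^ 3 - 3 * vnorm D * dot D h).
Proof.
rewrite !cubic_model_shiftE /cubic_model_grad /quad mvD !dotDl !dotDr dotZr.
by rewrite (dotC D gt) (dotC h gt) (dotC D h) (dot_mv_sym B D h B_sym); lra.
Qed.

Lemma quadZ a u : quad B (vscale a u) = a * a * quad B u.
Proof. by rewrite /quad mvZ dotZl dotZr; lra. Qed.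

Section Minimizer.
Variable D : vec d.
Hypothesis D_min : forall Y, mt D <= mt Y.

Lemma cubic_model_grad_min : cubic_model_grad D = vzero.
Proof.
set G := cubic_model_grad D; set w := dot G G.
apply: dot_eq0; suff : 0 <= - w by have := dot_ge0 G; rewrite -/w; lra.
set r := vnorm D; set n := vnorm G.
have r0 : 0 <= r := vnorm_ge0 D; have n0 : 0 <= n := vnorm_ge0 G.
have nn : n * n = w := vnorm_mul_self G.
apply: (ge0_of_ge0_add_mul _ (Rabs (quad B G) / 2 + rho / 6 * w * (7 / 2 * r + n))).
move=> s [s0 s1]; set h := vscale (- s) G.
have := D_min (vadd D h); have := cubic_model_step D h.
have := vnorm_cube_step_le D h.
rewrite /h vnormZ quadZ dotZl -/G -/w -/r -/n Rabs_Ropp Rabs_right; last lra.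
set cube := _ - _ - _ => cube_le step min.
have q_le : s * s * quad B G <= s * s * Rabs (quad B G) by have := Rle_abs (quad B G); nra.
have cube_le' : rho / 6 * cube <= rho / 6 * (s * s * (w * (7 / 2 * r + n))).
  apply: Rmult_le_compat_l; first lra.
  apply: (Rle_trans _ _ _ cube_le); rewrite -nn.
  have -> : (s * n) ^ 2 = s * s * (n * n) by ring.
  have -> : s * s * (n * n * (7 / 2 * r + n)) = s * s * (n * n) * (7 / 2 * r + n) by ring.
  apply: Rmult_le_compat_l; first by nra.
  have : s * n <= n by nra.
  lra.
have decrease : 0 <= s * (- w + s * (Rabs (quad B G) / 2 + rho / 6 * w * (7 / 2 * r + n))).
  have -> : s * (- w + s * (Rabs (quad B G) / 2 + rho / 6 * w * (7 / 2 * r + n))) =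
    - s * w + / 2 * (s * s * Rabs (quad B G)) + rho / 6 * (s * s * (w * (7 / 2 * r + n))).
    by field.
  have ss : - s * - s = s * s by ring.
  by rewrite ss in step; lra.
by apply: (Rmult_le_reg_l s); lra.
Qed.

Lemma cubic_model_min_step h :
  0 <= / 2 * quad B h + rho / 6 * (vnorm (vadd D h) ^ 3 - vnorm D ^ 3 - 3 * vnorm D * dot D h).
Proof.
have := D_min (vadd D h); have := cubic_model_step D h.
by rewrite cubic_model_grad_min dotC dot0l; lra.
Qed.

Lemma cubic_model_psd_min_orth u :
  dot D u = 0 -> 0 <= quad B u + rho / 2 * vnorm D * dot u u.
Proof.
move=> uD0; set r := vnorm D; set w := dot u u; set n := vnorm u.
have nn : n * n = w := vnorm_mul_self u; have r0 : 0 <= r := vnorm_ge0 D.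
suff : 0 <= quad B u / 2 + rho / 4 * r * w by lra.
apply: (ge0_of_ge0_add_mul _ (rho / 6 * w * n)) => s [s0 s1].
have uDs : dot D (vscale s u) = 0 by rewrite dotZr uD0; ring.
have := cubic_model_min_step (vscale s u); have := vnorm_cube_orth_le D (vscale s u) uDs.
rewrite uDs vnormZ quadZ Rabs_right -/r -/n; last lra.
move=> cube_le step_s.
have cube_le' : rho / 6 * (vnorm (vadd D (vscale s u)) ^ 3 - r ^ 3)
    <= rho / 6 * (s * s * (w * (3 / 2 * r + s * n))).
  apply: Rmult_le_compat_l; first lra.
  by apply: (Rle_trans _ _ _ cube_le); rewrite -nn; lra.
have : 0 <= s * s * (quad B u / 2 + rho / 4 * r * w + s * (rho / 6 * w * n)).
  have -> : s * s * (quad B u / 2 + rho / 4 * r * w + s * (rho / 6 * w * n)) =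
    / 2 * (s * s * quad B u) + rho / 6 * (s * s * (w * (3 / 2 * r + s * n))) by field.
  by rewrite Rmult_0_r Rminus_0_r in step_s; lra.
have : 0 < s * s by nra.
by nra.
Qed.

Lemma cubic_model_psd_min_nonorth u :
  dot D u <> 0 -> 0 <= quad B u + rho / 2 * vnorm D * dot u u.
Proof.
move=> uD_ne0; set r := vnorm D; set w := dot u u.
have w_pos : 0 < w.
  have [//|w_eq0] := Rle_lt_or_eq_dec _ _ (dot_ge0 u : 0 <= w).
  by have := dot_sq_le D u; rewrite -/w -w_eq0; nra.
(* the step [h] is chosen so that [D + h] has the same norm as [D] *)
set s := -2 * dot D u / w; set h := vscale s u.
have sw : s * w = -2 * dot D u by rewrite /s; field; lra.
have s_ne0 : s <> 0 by move=> s0; rewrite s0 in sw; lra.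
have N_eq : vnorm (vadd D h) = r.
  rewrite /r /vnorm !dotDl !dotDr /h !dotZl !dotZr (dotC u D) -/w.
  by congr sqrt; nra.
have := cubic_model_min_step h; rewrite N_eq /h quadZ dotZr -/r.
have -> : s * dot D u = - (s * s * w) / 2 by nra.
have -> : r ^ 3 - r ^ 3 - 3 * r * (- (s * s * w) / 2) = 3 / 2 * r * (s * s * w) by field.
move=> step_h; have ss_pos : 0 < s * s by nra.
apply: (Rmult_le_reg_l (s * s)); first done.
have -> : s * s * (quad B u + rho / 2 * r * w) =
  2 * (/ 2 * (s * s * quad B u) + rho / 6 * (3 / 2 * r * (s * s * w))) by field.
lra.
Qed.

Lemma cubic_model_psd_min u : 0 <= quad B u + rho / 2 * vnorm D * dot u u.
Proof.
by case: (Req_dec (dot D u) 0) => [/cubic_model_psd_min_orth | /cubic_model_psd_min_nonorth].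
Qed.

Lemma cubic_model_min_value : mt D <= - (rho / 12) * vnorm D ^ 3.
Proof.
have := f_equal (dot D) cubic_model_grad_min.
rewrite /cubic_model_grad !dotDr dotZr (dotC D vzero) dot0l -vnorm_mul_self => grad_D.
have := cubic_model_psd_min D; rewrite cubic_model_shiftE /quad -vnorm_mul_self.
have -> : vnorm D ^ 3 = vnorm D * (vnorm D * vnorm D) by ring.
lra.
Qed.
End Minimizer.
End CubicModel.

Section Taylor.
Context {d : nat}.
Variables (g : vec d -> vec d) (H : vec d -> mat d).
Hypothesis g_jac : is_jacobian g H.

Lemma derivable_pt_lim_dot_line (V x D : vec d) c :
  derivable_pt_lim (fun t => dot V (g (vadd x (vscale t D)))) c
    (dot V (mv (H (vadd x (vscale c D))) D)).
Proof.
move=> eps eps_pos.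
set y := vadd x (vscale c D); set nv := vnorm V; set nd := vnorm D.
have nv0 : 0 <= nv := vnorm_ge0 V; have nd0 : 0 <= nd := vnorm_ge0 D.
set eps' := eps / ((nv + 1) * (nd + 1)).
have eps'_pos : 0 < eps' by apply: Rdiv_lt_0_compat; nra.
have [delta [delta_pos jac]] := g_jac y eps' eps'_pos.
have delta'_pos : 0 < delta / (nd + 1) by apply: Rdiv_lt_0_compat; lra.
exists (mkposreal _ delta'_pos) => h h_ne0 /= h_small.
have h_pos : 0 < Rabs h := Rabs_pos_lt h h_ne0.
have -> : vadd x (vscale (c + h) D) = vadd y (vscale h D).
  by apply: functional_extensionality => i; rewrite /y /vadd /vscale; lra.
have hD_small : vnorm (vscale h D) < delta.
  have : Rabs h * (nd + 1) < delta / (nd + 1) * (nd + 1) by apply: Rmult_lt_compat_r; lra.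
  rewrite /Rdiv Rmult_assoc Rinv_l ?Rmult_1_r; last lra.
  by rewrite vnormZ -/nd; nra.
have := jac _ hD_small; rewrite vnormZ -/nd.
set W := vsub (vsub _ (g y)) _ => W_le.
have -> : (dot V (g (vadd y (vscale h D))) - dot V (g y)) / h - dot V (mv (H y) D) = dot V W / h.
  by rewrite /W !dotBr mvZ dotZr; field.
rewrite /Rdiv Rabs_mult Rabs_inv; apply: (Rmult_lt_reg_r (Rabs h)) => //.
rewrite Rmult_assoc Rinv_l ?Rmult_1_r; last lra.
apply: (Rle_lt_trans _ _ _ (Rabs_dot_le V W)); rewrite -/nv.
have : nv * vnorm W <= nv * (eps' * (Rabs h * nd)) by apply: Rmult_le_compat_l.
have : eps' * ((nv + 1) * (nd + 1)) = eps by rewrite /eps'; field; nra.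
move=> eps'_eq W_bound; apply: (Rle_lt_trans _ _ _ W_bound); rewrite -eps'_eq.
have : 0 < eps' * Rabs h by nra.
by nra.
Qed.

Variable rho : R.
Hypothesis rho_ge0 : 0 <= rho.
Hypothesis H_lip : hess_lipschitz H rho.

Lemma gradient_taylor_le (x D : vec d) :
  vnorm (vsub (vsub (g (vadd x D)) (g x)) (mv (H x) D)) <= rho * vnorm D ^ 2.
Proof.
set V := vsub (vsub _ _) _; set nv := vnorm V; set nd := vnorm D.
have nv0 : 0 <= nv := vnorm_ge0 V; have nd0 : 0 <= nd := vnorm_ge0 D.
have [xi [mvt [xi0 xi1]]] := MVT_cor2 _ _ 0 1 Rlt_0_1
  (fun c _ => derivable_pt_lim_dot_line V x D c).
set y := vadd x (vscale xi D) in mvt.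
have x_D : vadd x (vscale 1 D) = vadd x D.
  by apply: functional_extensionality => i; rewrite /vadd /vscale; lra.
have x_0 : vadd x (vscale 0 D) = x.
  by apply: functional_extensionality => i; rewrite /vadd /vscale; lra.
rewrite x_D x_0 Rminus_0_r Rmult_1_r in mvt.
have VV : nv * nv = dot V (mv (msub (H y) (H x)) D).
  by rewrite vnorm_mul_self {2}/V mv_msub !dotBr -mvt.
have lip : vnorm (mv (msub (H y) (H x)) D) <= rho * (xi * nd) * nd.
  have -> : xi * nd = vnorm (vsub y x).
    have -> : vsub y x = vscale xi D.
      by apply: functional_extensionality => i; rewrite /y /vsub /vadd /vscale; lra.
    by rewrite vnormZ Rabs_right //; lra.
  exact: H_lip.
have := dot_le V (mv (msub (H y) (H x)) D); rewrite -VV -/nv => VV_le.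
have : nv * nv <= nv * (rho * nd ^ 2).
  apply: (Rle_trans _ _ _ VV_le); apply: Rmult_le_compat_l => //.
  apply: (Rle_trans _ _ _ lip).
  have : 0 <= rho * nd * nd by apply: Rmult_le_pos; [apply: Rmult_le_pos |].
  by nra.
have [nv_pos | <-] := Rle_lt_or_eq_dec _ _ nv0; last by nra.
by move=> /(Rmult_le_reg_l _ _ _ nv_pos).
Qed.
End Taylor.

Section MinimizerStationarity.
Context {d : nat}.
Variables (g : vec d -> vec d) (H : vec d -> mat d) (rho : R).
Variables (x gt : vec d) (B : mat d) (D : vec d) (a b : R).
Hypothesis g_jac : is_jacobian g H.
Hypothesis rho_ge0 : 0 <= rho.
Hypothesis H_lip : hess_lipschitz H rho.
Hypothesis D_grad : cubic_model_grad rho gt B D = vzero.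
Hypothesis D_psd : forall u, 0 <= quad B u + rho / 2 * vnorm D * dot u u.
Hypothesis g_err : vnorm (vsub gt (g x)) <= a.
Hypothesis H_err : forall v, vnorm (mv (msub B (H x)) v) <= b * vnorm v.

Lemma vnorm_gradient_step_le : vnorm (g (vadd x D)) <= a + b * vnorm D + 3 / 2 * rho * vnorm D ^ 2.
Proof.
set V := vsub (vsub (g (vadd x D)) (g x)) (mv (H x) D).
have r0 := vnorm_ge0 D.
have -> : g (vadd x D) = vsub (vsub (vsub V (vsub gt (g x))) (mv (msub B (H x)) D))
                              (vscale (rho / 2 * vnorm D) D).
  apply: functional_extensionality => i; have := f_equal (fun v => v i) D_grad.
  by rewrite /V /cubic_model_grad mv_msub /vsub /vadd /vscale /vzero; lra.
apply: (Rle_trans _ _ _ (vnorm_sub_le _ _)); rewrite vnormZ Rabs_right; last by nra.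
have := vnorm_sub_le (vsub V (vsub gt (g x))) (mv (msub B (H x)) D).
have := vnorm_sub_le V (vsub gt (g x)).
have := gradient_taylor_le g H g_jac rho rho_ge0 H_lip x D; have := H_err D.
rewrite -/V; lra.
Qed.

Lemma eigenvalue_step_ge : lambda_min_ge (H (vadd x D)) (- (b + 3 / 2 * rho * vnorm D)).
Proof.
move=> l [v [v_ne0 Hv]].
set r := vnorm D; set n := vnorm v; have nn : n * n = dot v v := vnorm_mul_self v.
have r0 : 0 <= r := vnorm_ge0 D; have n0 : 0 <= n := vnorm_ge0 v.
have w_pos : 0 < dot v v.
  have [//|w_eq0] := Rle_lt_or_eq_dec _ _ (dot_ge0 v).
  by case: v_ne0; apply: dot_eq0.
have : l * dot v v = dot v (mv (msub (H (vadd x D)) (H x)) v)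
    - dot v (mv (msub B (H x)) v) + quad B v.
  by rewrite -dotZr -Hv /quad !mv_msub !dotBr; lra.
have lip : vnorm (mv (msub (H (vadd x D)) (H x)) v) <= rho * r * n.
  have := H_lip (vadd x D) x v.
  have -> // : vsub (vadd x D) x = D.
  by apply: functional_extensionality => i; rewrite /vsub /vadd; lra.
have := dot_ge v (mv (msub (H (vadd x D)) (H x)) v).
have := dot_le v (mv (msub B (H x)) v).
have := D_psd v; have := H_err v; rewrite -/r -/n => B_err psd B_le H_ge l_eq.
have : - (b + 3 / 2 * rho * r) * dot v v <= l * dot v v.
  rewrite -nn in l_eq psd *.
  have : n * vnorm (mv (msub (H (vadd x D)) (H x)) v) <= n * (rho * r * n).
    exact: Rmult_le_compat_l.
  have : n * vnorm (mv (msub B (H x)) v) <= n * (b * n) by exact: Rmult_le_compat_l.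
  by nra.
by move=> /(Rmult_le_reg_r _ _ _ w_pos).
Qed.
End MinimizerStationarity.

Section Scales.
Variables rho eps : R.
Hypotheses (rho_gt0 : 0 < rho) (eps_gt0 : 0 < eps).

Lemma mul_sqrt_div : rho * sqrt (eps / rho) = sqrt (rho * eps).
Proof.
have -> : rho * eps = (rho * rho) * (eps / rho) by field; lra.
rewrite sqrt_mult ?sqrt_square //; try lra; try nra.
by apply/Rlt_le/Rdiv_lt_0_compat.
Qed.

Lemma sqrt_div_mul_sqrt : sqrt (eps / rho) * sqrt (rho * eps) = eps.
Proof.
rewrite -sqrt_mult; first last; try nra; first by apply/Rlt_le/Rdiv_lt_0_compat.
have -> : eps / rho * (rho * eps) = eps * eps by field; lra.
by rewrite sqrt_square; lra.
Qed.

Lemma sqrt_cube_div : sqrt (eps ^ 3 / rho) = eps * sqrt (eps / rho).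
Proof.
have -> : eps ^ 3 / rho = (eps * eps) * (eps / rho) by field; lra.
rewrite sqrt_mult ?sqrt_square //; try lra; try nra.
by apply/Rlt_le/Rdiv_lt_0_compat.
Qed.
End Scales.

Lemma eps_SOSP_of_small_minimizer {d} (g : vec d -> vec d) (H : vec d -> mat d)
    (rho eps c1 c2 : R) (x gt : vec d) (B : mat d) (D : vec d) :
  is_jacobian g H -> 0 < rho -> hess_lipschitz H rho -> 0 < eps ->
  c1 <= 1 / 10 -> c2 <= 1 / 10 -> CC g H rho eps c1 c2 x gt B ->
  cubic_model_grad rho gt B D = vzero ->
  (forall u, 0 <= quad B u + rho / 2 * vnorm D * dot u u) ->
  vnorm D < / 2 * sqrt (eps / rho) -> is_eps_SOSP g H rho eps (vadd x D).
Proof.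
move=> g_jac rho_gt0 H_lip eps_gt0 c1_le c2_le [g_err H_err] D_grad D_psd D_small.
have t_se := sqrt_div_mul_sqrt rho eps rho_gt0 eps_gt0.
have rho_t := mul_sqrt_div rho eps rho_gt0 eps_gt0.
set t := sqrt (eps / rho) in t_se rho_t D_small *.
set se := sqrt (rho * eps) in t_se rho_t H_err *.
set r := vnorm D in D_small D_psd *.
have r0 : 0 <= r := vnorm_ge0 D; have se0 : 0 <= se := sqrt_pos _.
have rho_r : rho * r < se / 2 by rewrite -rho_t; nra.
have c2_se : c2 * se <= se / 10 by nra.
split.
- apply: (Rle_trans _ _ _ (vnorm_gradient_step_le g H rho x gt B D _ _ g_jac
    (Rlt_le _ _ rho_gt0) H_lip D_grad g_err H_err)); rewrite -/r.
  have : c2 * se * r <= se / 10 * r by apply: Rmult_le_compat_r.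
  have : se / 10 * r <= se / 10 * (/ 2 * t) by apply: Rmult_le_compat_l; lra.
  have : rho * r * r <= se / 2 * (/ 2 * t) by apply: Rmult_le_compat; nra.
  have : c1 * eps <= eps / 10 by nra.
  have -> : r ^ 2 = r * r by ring.
  have -> : se / 10 * (/ 2 * t) = eps / 20 by rewrite -t_se; field.
  have -> : se / 2 * (/ 2 * t) = eps / 4 by rewrite -t_se; field.
  lra.
- move=> l /(eigenvalue_step_ge H rho x B D _ H_lip D_psd H_err); rewrite -/r -/se.
  by lra.
Qed.

Lemma rho_cube_ge (rho eps r : R) : 0 < rho -> 0 < eps ->
  r >= / 2 * sqrt (eps / rho) -> / 8 * sqrt (eps ^ 3 / rho) <= rho * r ^ 3.
Proof.
move=> rho_gt0 eps_gt0 r_ge.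
have := sqrt_div_mul_sqrt rho eps rho_gt0 eps_gt0.
rewrite sqrt_cube_div // -(mul_sqrt_div rho eps) //.
set t := sqrt (eps / rho) in r_ge *; have t0 : 0 <= t := sqrt_pos _ => eps_t.
have : (/ 2 * t) ^ 3 <= r ^ 3 by apply: pow_incr; split; lra.
rewrite -eps_t; nra.
Qed.

Theorem claim1 :
  exists cbar : R, 0 < cbar /\
  forall (d : nat) (f : vec d -> R) (g : vec d -> vec d) (H : vec d -> mat d)
    (rho eps c1 c2 c3 : R) (x gt : vec d) (Bt : mat d) (Dt Dstar : vec d),
    is_gradient f g ->
    is_jacobian g H ->
    0 < rho ->
    hess_lipschitz H rho ->
    0 < eps ->
    c1 <= cbar -> c2 <= cbar ->
    mx_symmetric Bt ->
    CC g H rho eps c1 c2 x gt Bt ->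
    0 <= c3 -> c3 < 1 ->
    (forall D : vec d,
       cubic_model_shift f rho x gt Bt Dstar <= cubic_model_shift f rho x gt Bt D) ->
    (vnorm Dstar >= / 2 * sqrt (eps / rho) ->
       cubic_model_shift f rho x gt Bt Dt <=
       cubic_model_shift f rho x gt Bt Dstar + c3 / 12 * rho * vnorm Dstar ^ 3) ->
    ~ is_eps_SOSP g H rho eps (vadd x Dstar) ->
    cubic_model f rho x gt Bt (vadd x Dt) - cubic_model f rho x gt Bt x
      <= - ((1 - c3) / 96) * sqrt (eps ^ 3 / rho).
Proof.
exists (1 / 10); split; first lra.
move=> d f g H rho eps c1 c2 c3 x gt B Dt D _ g_jac rho_gt0 H_lip eps_gt0 c1_le c2_le
  B_sym cc c3_ge0 c3_lt1 D_min case2 not_SOSP.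
have D_large : vnorm D >= / 2 * sqrt (eps / rho).
  apply: Rnot_lt_ge => D_small; apply: not_SOSP.
  apply: (eps_SOSP_of_small_minimizer g H rho eps c1 c2 x gt B D) => //.
  - exact: (cubic_model_grad_min f rho x gt B B_sym rho_gt0 D D_min).
  - exact: (cubic_model_psd_min f rho x gt B B_sym rho_gt0 D D_min).
have := cubic_model_min_value f rho x gt B B_sym rho_gt0 D D_min.
have := rho_cube_ge rho eps (vnorm D) rho_gt0 eps_gt0 D_large.
have := case2 D_large; rewrite cubic_model_diff.
by nra.
Qed.
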